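(* Let $s\in(0,1)$, $d\ge1$ and let $B:=B_{\rho_0}(y_0)\subset\mathbb{R}^{1+d}$ be a half-parabolic ball. Let $S$ and $D$ be non-negative, monotone (with respect to inclusion) functions defined on the convex subsets of $B$. Assume that for every $n\in\mathbb{N}$ there is $C(n)>0$ such that for all half-parabolic balls $B_0,B_1,\dots,B_n\subset B$ with $B_0\subset\bigcup_{i=1}^nB_i$, $$S(B_0)\le C(n)\Big(\sum_{i=1}^nS(B_i)+D(B)\Big).$$ Then for any $\theta_0\in(0,1/2]$ and $\gamma>0$ there exists $\varepsilon=\varepsilon(\theta_0,\gamma,s,d,\rho_0)\in(0,1)$ such that, if for some $E\ge0$ $$\sigma^\gamma S(B_{\theta_0\sigma}(y))\le\varepsilon\,\sigma^\gamma S(B_\sigma(y))+E\quad\text{for all }B_\sigma(y)\subset B,$$ then for each $\theta\in(0,1)$ there is $C=C(d,\theta_0,\theta,\gamma,s,\rho_0)>0$ with $$\sigma^\gamma S(B_{\theta\sigma}(y))\le C\,(E+D(B))\quad\text{for all }B_\sigma(y)\subset B.$$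
   Context: Points of $\mathbb{R}^{1+d}$ are $x=(x_0,x_{1:d})$. For $r>0$ the half-parabolic ball is $B_r(x):=(x_0-r^{2s},x_0]\times B_r(x_{1:d})$, where $B_r(x_{1:d})$ is the open Euclidean ball in $\mathbb{R}^d$. *)

From HB Require Import structures.
From mathcomp Require Import all_boot all_order all_algebra.
From mathcomp Require Import all_classical all_reals.
From mathcomp Require Import exp.
Set Implicit Arguments. Unset Strict Implicit. Unset Printing Implicit Defensive.
Import Order.TTheory GRing.Theory Num.Theory.
Local Open Scope classical_set_scope.
Local Open Scope ring_scope.

Definition pt (R : realType) (d : nat) := (R * 'rV[R]_d)%type.

Definition hpball (R : realType) (d : nat) (s : R) (x : pt R d) (r : R)
  : set (pt R d) :=
  [set z : pt R d | x.1 - r `^ (2 * s) < z.1 /\ z.1 <= x.1 /\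
           \sum_(i < d) ((z.2 : 'rV[R]_d) ord0 i - (x.2 : 'rV[R]_d) ord0 i) ^+ 2 < r ^+ 2].

Definition convex_pt (R : realType) (d : nat) (A : set (pt R d)) : Prop :=
  forall p q, A p -> A q -> forall t : R, 0 <= t -> t <= 1 ->
    A (t * p.1 + (1 - t) * q.1, t *: p.2 + (1 - t) *: q.2).

From HB Require Import structures.
From mathcomp Require Import all_boot all_order all_algebra.
From mathcomp Require Import all_classical all_reals.
From mathcomp Require Import exp.
From mathcomp Require Import ring lra.
Set Implicit Arguments. Unset Strict Implicit. Unset Printing Implicit Defensive.
Import Order.TTheory GRing.Theory Num.Theory.
Local Open Scope classical_set_scope.
Local Open Scope ring_scope.

(* For 0 < theta < 1 and 0 < lambda <= 1 there are mu > 0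
   and n such that every B_{theta sigma}(y) is covered by n balls
   B_{lambda mu sigma}(c_i) whose enlargements B_{mu sigma}(c_i) still lie in
   B_sigma(y): take the c_i on a space-time grid of mesh comparable to
   lambda mu sigma.  With lambda = theta0^2, the covering hypothesis and the
   smallness hypothesis applied on the balls B_{theta0 mu sigma}(c_i) bound the
   supremum Q of sigma^gamma S(B_{theta0 sigma}(y)) over all B_sigma(y) in B
   (finite by monotonicity of S) by
     Q <= (C(n) n eps / mu^gamma) Q + C (E + D(B)),
   and for eps small the first term is absorbed.  A second covering, with
   lambda = theta0, passes from theta0 to an arbitrary theta in (0, 1). *)

Lemma convex_comb_lt (R : realDomainType) (t a b L : R) :
  0 <= t -> t <= 1 -> a < L -> b < L -> t * a + (1 - t) * b < L.
Proof.
move=> t0 t1 aL bL; have [->|t_gt0] := eqVneq t 0; first lra.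
have : t * a < t * L by rewrite ltr_pM2l // lt0r t_gt0.
have : (1 - t) * b <= (1 - t) * L by rewrite ler_wpM2l ?subr_ge0 // ltW.
lra.
Qed.

Lemma convex_comb_gt (R : realDomainType) (t a b L : R) :
  0 <= t -> t <= 1 -> L < a -> L < b -> L < t * a + (1 - t) * b.
Proof.
move=> t0 t1 aL bL; rewrite -ltrN2.
have -> : - (t * a + (1 - t) * b) = t * - a + (1 - t) * - b by ring.
by apply: convex_comb_lt; rewrite ?ltrN2.
Qed.

Lemma sqr_convex (R : realDomainType) (t u v : R) : 0 <= t -> t <= 1 ->
  (t * u + (1 - t) * v) ^+ 2 <= t * u ^+ 2 + (1 - t) * v ^+ 2.
Proof.
move=> t0 t1; rewrite -subr_ge0.
have -> : t * u ^+ 2 + (1 - t) * v ^+ 2 - (t * u + (1 - t) * v) ^+ 2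
    = t * (1 - t) * (u - v) ^+ 2 by ring.
by rewrite mulr_ge0 ?sqr_ge0 // mulr_ge0 // subr_ge0.
Qed.

Lemma sqrD_weighted_le (R : realDomainType) (a b x y : R) : 0 <= x -> 0 <= y ->
  x * y * (a + b) ^+ 2 <= (x + y) * (y * a ^+ 2 + x * b ^+ 2).
Proof.
move=> x0 y0; rewrite -subr_ge0.
have -> : (x + y) * (y * a ^+ 2 + x * b ^+ 2) - x * y * (a + b) ^+ 2
    = (y * a - x * b) ^+ 2 by ring.
exact: sqr_ge0.
Qed.

Definition sqdist {R : realType} {d : nat} (u v : 'rV[R]_d) : R :=
  \sum_(i < d) (u ord0 i - v ord0 i) ^+ 2.

Section Sqdist.
Variables (R : realType) (d : nat).
Implicit Types u v w : 'rV[R]_d.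

Lemma sqdistxx u : sqdist u u = 0.
Proof. by rewrite /sqdist big1 // => i _; rewrite subrr expr0n. Qed.

Lemma sqdistC u v : sqdist u v = sqdist v u.
Proof. by apply: eq_bigr => i _; rewrite -sqrrN opprB. Qed.

Lemma sqr_coord_le_sqdist u v j : (u ord0 j - v ord0 j) ^+ 2 <= sqdist u v.
Proof.
by rewrite /sqdist (bigD1 j) //= lerDl sumr_ge0 // => i _; rewrite sqr_ge0.
Qed.

(* The triangle inequality for the Euclidean distance in squared form; the
   weights [y], [x] in [sqrD_weighted_le] avoid square roots. *)
Lemma sqdist_triangle_lt u v w (x y : R) : 0 < x -> 0 < y ->
  sqdist u v < x ^+ 2 -> sqdist v w < y ^+ 2 -> sqdist u w < (x + y) ^+ 2.
Proof.
move=> x0 y0 uv vw; rewrite -(@ltr_pM2l _ (x * y)) ?mulr_gt0 //.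
have -> : sqdist u w = \sum_(i < d)
    ((u ord0 i - v ord0 i) + (v ord0 i - w ord0 i)) ^+ 2.
  by apply: eq_bigr => i _; rewrite addrA subrK.
rewrite mulr_sumr; apply: (@le_lt_trans _ _ (\sum_(i < d) (x + y) *
    (y * (u ord0 i - v ord0 i) ^+ 2 + x * (v ord0 i - w ord0 i) ^+ 2))).
  by apply: ler_sum => i _; apply: sqrD_weighted_le; apply: ltW.
rewrite -mulr_sumr big_split /= -!mulr_sumr.
have -> : x * y * (x + y) ^+ 2 = (x + y) * (y * x ^+ 2 + x * y ^+ 2) by ring.
rewrite ltr_pM2l ?addr_gt0 //.
have : y * sqdist u v < y * x ^+ 2 by rewrite ltr_pM2l.
have : x * sqdist v w < x * y ^+ 2 by rewrite ltr_pM2l.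
rewrite /sqdist; lra.
Qed.

Lemma sqdist_convex u v w (t : R) : 0 <= t -> t <= 1 ->
  sqdist (t *: u + (1 - t) *: v) w <= t * sqdist u w + (1 - t) * sqdist v w.
Proof.
move=> t0 t1; rewrite /sqdist !mulr_sumr -big_split /=; apply: ler_sum => i _.
have -> : (t *: u + (1 - t) *: v) ord0 i - w ord0 i
    = t * (u ord0 i - w ord0 i) + (1 - t) * (v ord0 i - w ord0 i).
  by rewrite !mxE; ring.
exact: sqr_convex.
Qed.

End Sqdist.

Section HalfParabolicBall.
Variables (R : realType) (d : nat) (s : R).
Hypothesis s_gt0 : 0 < s.
Implicit Types (x y c p : pt R d).

Lemma ler_powR2s (a b : R) : 0 <= a -> a <= b -> a `^ (2 * s) <= b `^ (2 * s).
Proof.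
move=> a0 ab; apply: ge0_ler_powR; rewrite ?nnegrE ?(le_trans a0 ab) //.
by rewrite mulr_ge0 // ltW.
Qed.

Lemma ltr_powR2s (a b : R) : 0 <= a -> a < b -> a `^ (2 * s) < b `^ (2 * s).
Proof.
move=> a0 ab; apply: gt0_ltr_powR; rewrite ?nnegrE ?(le_trans a0 (ltW ab)) //.
by rewrite mulr_gt0.
Qed.

Lemma le_hpball x (r1 r2 : R) : 0 <= r1 -> r1 <= r2 ->
  hpball s x r1 `<=` hpball s x r2.
Proof.
move=> r10 r12 z [z1 [z2 z3]]; split; [|split] => //.
  by have := ler_powR2s r10 r12; lra.
by apply: lt_le_trans z3 _; rewrite ler_sqr ?nnegrE ?(le_trans r10 r12).
Qed.

Lemma hpball_below_center x (r t : R) : 0 < r -> 0 <= t -> t < r `^ (2 * s) ->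
  hpball s x r (x.1 - t, x.2).
Proof.
move=> r0 t0 tr; rewrite /hpball /=; split; [lra | split; [lra |]].
by rewrite -/(sqdist _ _) sqdistxx exprn_gt0.
Qed.

Lemma hpball_radius_le y c (sigma rho : R) : 0 < sigma -> 0 <= rho ->
  hpball s y sigma `<=` hpball s c rho -> sigma <= rho.
Proof.
move=> sigma0 rho0 sub; rewrite leNgt; apply/negP => rho_sigma.
have rs := ltr_powR2s rho0 rho_sigma.
have [_ [yc _]] := sub _ (hpball_below_center y sigma0 (lexx 0) (powR_gt0 _ sigma0)).
have [lower _] := sub _ (hpball_below_center y sigma0 (powR_ge0 _ _) rs).
move: yc lower => /=; rewrite subr0; lra.
Qed.

Lemma convex_hpball x (r : R) : convex_pt (hpball s x r).
Proof.
move=> p q [p1 [p2 p3]] [q1 [q2 q3]] t t0 t1; split; [|split] => /=.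
- exact: convex_comb_gt.
- have t1' : 0 <= 1 - t by rewrite subr_ge0.
  by have := ler_wpM2l t0 p2; have := ler_wpM2l t1' q2; lra.
- apply: le_lt_trans (sqdist_convex _ _ _ t0 t1) _.
  exact: convex_comb_lt.
Qed.

Lemma hpball_scale_sub x (t r : R) : 0 <= t -> t <= 1 -> 0 <= r ->
  hpball s x (t * r) `<=` hpball s x r.
Proof. by move=> t0 t1 r0; apply: le_hpball; rewrite ?mulr_ge0 // ler_piMl. Qed.

Lemma hpball_sub_hpball y c p (rho r sigma : R) : 0 < rho -> 0 < r ->
  rho `^ (2 * s) + r `^ (2 * s) <= sigma `^ (2 * s) -> rho + 2 * r <= sigma ->
  hpball s y rho p -> hpball s c r p -> c.1 <= y.1 ->
  hpball s c r `<=` hpball s y sigma.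
Proof.
move=> rho0 r0 pow_sum rad_sum [py1 [py2 py3]] [pc1 [pc2 pc3]] cy w [w1 [w2 w3]].
split; [lra | split; [lra |]].
rewrite -/(sqdist _ _) sqdistC in pc3.
have := sqdist_triangle_lt (addr_gt0 r0 r0) rho0 (sqdist_triangle_lt r0 r0 w3 pc3) py3.
move/lt_le_trans; apply; rewrite ler_sqr ?nnegrE; lra.
Qed.

(* The relative radius for which [hpball_sub_hpball] applies with
   [rho = theta * sigma] and [r = mu * sigma]. *)
Lemma exists_hpball_margin (theta : R) : 0 < theta -> theta < 1 ->
  exists2 mu, 0 < mu &
    theta + 2 * mu <= 1 /\ theta `^ (2 * s) + mu `^ (2 * s) <= 1.
Proof.
move=> theta0 theta1; have s2 : 0 < 2 * s by rewrite mulr_gt0.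
have theta_pow : theta `^ (2 * s) < 1.
  by have := ltr_powR2s (ltW theta0) theta1; rewrite powR1.
set X := 1 - theta `^ (2 * s); have X0 : 0 < X by rewrite subr_gt0.
pose mu := Num.min ((1 - theta) / 2) (X `^ (2 * s)^-1).
have [mu_rad mu_X] : mu <= (1 - theta) / 2 /\ mu <= X `^ (2 * s)^-1.
  by split; rewrite ge_min lexx ?orbT.
have mu0 : 0 < mu by rewrite lt_min powR_gt0 // andbT divr_gt0 ?subr_gt0.
exists mu => //; split; first lra.
suff : mu `^ (2 * s) <= X by rewrite /X; lra.
apply: le_trans (ler_powR2s (ltW mu0) mu_X) _.
by rewrite -powRrM mulVf ?powRr1 ?(ltW X0) // gt_eqF.
Qed.

End HalfParabolicBall.

Lemma exists_nat_mulr_ge (R : archiFieldType) (x y : R) : 0 <= x -> 0 < y ->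
  exists n : nat, x <= n%:R * y.
Proof.
move=> x0 y0; exists (Num.truncn (x / y)).+1; rewrite -ler_pdivrMr //.
by apply: ltW; have /andP[] := truncn_itv (divr_ge0 x0 (ltW y0)).
Qed.

Lemma finite_family_nat_enum (X : Type) (T : finType) (P : X -> Prop) (x0 : X)
    (F : T -> X) : P x0 ->
  exists c : nat -> X, (forall i, P (c i)) /\
    (forall t, P (F t) -> exists2 i, (1 <= i <= #|T|)%N & c i = F t).
Proof.
move=> Px0; pose G t := if pselect (P (F t)) then F t else x0.
have PG t : P (G t) by rewrite /G; case: pselect.
have Pnth r i : P (nth x0 (map G r) i) by elim: r i => [|t r IH] [|i] //=.
exists (fun i => nth x0 (map G (enum T)) i.-1); split => // t PFt.
have t_enum : t \in enum T by rewrite mem_enum.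
exists (index t (enum T)).+1; first by rewrite /= cardE index_mem.
by rewrite /= (nth_map t) ?index_mem // nth_index // /G; case: pselect.
Qed.

Section Grid.
Variables (R : realType) (d : nat) (s : R).

Definition grid (K M : nat) := ('I_K * {ffun 'I_d -> 'I_(2 * M)})%type.

(* Time step [r ^ (2 s)], space step [r / (d + 1)]; the space indices are
   shifted by [M] so that they are natural numbers. *)
Definition grid_center (y : pt R d) (r : R) (K M : nat) (t : grid K M) : pt R d :=
  (y.1 - (t.1)%:R * r `^ (2 * s),
   \row_j (y.2 ord0 j + r / d.+1%:R * ((t.2 j)%:R - M%:R))).

Lemma grid_index (x tau : R) (K : nat) : 0 < tau -> 0 <= x -> x < K%:R * tau ->
  exists k : 'I_K, k%:R * tau <= x < k%:R * tau + tau.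
Proof.
move=> tau0 x0 xK; have /andP[lo hi] := truncn_itv (divr_ge0 x0 (ltW tau0)).
have kK : (Num.truncn (x / tau) < K)%N.
  by rewrite -(ltr_nat R); apply: le_lt_trans lo _; rewrite ltr_pdivrMr.
exists (Ordinal kK) => /=; rewrite -ler_pdivlMr // lo /=.
by rewrite -[X in _ + X]mul1r -mulrDl natr1 -ltr_pdivrMr.
Qed.

Lemma mem_hpball_grid (y p : pt R d) (rho r : R) (K M : nat) : 0 < rho -> 0 < r ->
  rho `^ (2 * s) <= K%:R * r `^ (2 * s) -> rho * d.+1%:R <= M%:R * r ->
  hpball s y rho p -> exists t : grid K M, hpball s (grid_center y r t) r p.
Proof.
move=> rho0 r0 rhoK rhoM [p1 [p2 p3]]; set h := r / d.+1%:R.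
have h0 : 0 < h by rewrite divr_gt0.
have [k /andP[k1 k2]] : exists k : 'I_K,
    k%:R * r `^ (2 * s) <= y.1 - p.1 < k%:R * r `^ (2 * s) + r `^ (2 * s).
  by apply: grid_index; [exact: powR_gt0 | lra | lra].
have pyM j : - (M%:R * h) < p.2 ord0 j - y.2 ord0 j < M%:R * h.
  have rhoMh : rho <= M%:R * h by rewrite /h mulrA ler_pdivlMr.
  have := le_lt_trans (sqr_coord_le_sqdist p.2 y.2 j) p3.
  by rewrite !expr2 => sq; apply/andP; split; nra.
have /fin_all_exists [l hl] : forall j : 'I_d, exists l : 'I_(2 * M),
    l%:R * h <= p.2 ord0 j - y.2 ord0 j + M%:R * h < l%:R * h + h.
  move=> j; have /andP[lo hi] := pyM j.
  by apply: grid_index; rewrite ?natrM //; lra.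
pose t : grid K M := (k, [ffun j => l j]).
exists t; split; [|split] => /=; [lra | lra |].
have sq_le j : (p.2 ord0 j - (grid_center y r t).2 ord0 j) ^+ 2 <= h ^+ 2.
  rewrite /= mxE ffunE; have /andP[l1 l2] := hl j.
  rewrite -/h ler_sqr ?nnegrE; lra.
have r_h : r = d.+1%:R * h by rewrite /h mulrC divfK // pnatr_eq0.
have dh : d%:R * h ^+ 2 < r ^+ 2.
  clearbody h; rewrite r_h exprMn ltr_pM2r ?exprn_gt0 // -natrX ltr_nat.
  by rewrite expnS expn1 (leq_trans (ltnSn d)) // leq_pmulr.
apply: le_lt_trans dh; apply: le_trans (ler_sum _ (fun j _ => sq_le j)) _.
by rewrite sumr_const card_ord mulr_natl.
Qed.

End Grid.

Section Covering.
Variables (R : realType) (d : nat) (s : R).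
Hypothesis s_gt0 : 0 < s.

Definition hpball_covering (theta lambda mu : R) (n : nat) : Prop :=
  forall (y : pt R d) (sigma : R), 0 < sigma ->
  exists c : nat -> pt R d,
    (forall i, hpball s (c i) (mu * sigma) `<=` hpball s y sigma) /\
    hpball s y (theta * sigma) `<=`
      \bigcup_(i in [set i | (1 <= i <= n)%N]) hpball s (c i) (lambda * (mu * sigma)).

Lemma exists_hpball_covering (theta lambda : R) :
  0 < theta -> theta < 1 -> 0 < lambda -> lambda <= 1 ->
  exists mu n, 0 < mu /\ hpball_covering theta lambda mu n.
Proof.
move=> theta0 theta1 lambda0 lambda1.
have [mu mu0 [mu_rad mu_pow]] := exists_hpball_margin s_gt0 theta0 theta1.
pose kappa := lambda * mu; have kappa0 : 0 < kappa by rewrite mulr_gt0.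
have [K K_pow] := exists_nat_mulr_ge (powR_ge0 theta (2 * s)) (powR_gt0 (2 * s) kappa0).
have [M M_rad] := exists_nat_mulr_ge (mulr_ge0 (ltW theta0) (ler0n R d.+1)) kappa0.
exists mu, #|{: grid d K M}|; split => // y sigma sigma0.
have mu_sigma0 : 0 < mu * sigma by rewrite mulr_gt0.
have kappa_mu : kappa * sigma <= mu * sigma.
  by rewrite ler_wpM2r ?(ltW sigma0) // ler_piMl ?(ltW mu0).
have mu_sigma : mu * sigma <= sigma by rewrite ler_piMl ?(ltW sigma0) //; lra.
have [c [c_sub c_cov]] := finite_family_nat_enum
  (P := fun c => hpball s c (mu * sigma) `<=` hpball s y sigma)
  (fun t : grid d K M => grid_center s y (kappa * sigma) t)
  (le_hpball s_gt0 (x := y) (ltW mu_sigma0) mu_sigma).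
exists c; split => // p p_in.
have sigma_pow := powR_gt0 (2 * s) sigma0.
have [t p_t] : exists t : grid d K M,
    hpball s (grid_center s y (kappa * sigma) t) (kappa * sigma) p.
  apply: mem_hpball_grid p_in; rewrite ?mulr_gt0 //.
    rewrite (powRM _ (ltW theta0) (ltW sigma0)) (powRM _ (ltW kappa0) (ltW sigma0)).
    by rewrite mulrA ler_wpM2r ?(ltW sigma_pow).
  by rewrite mulrAC mulrA ler_wpM2r ?(ltW sigma0).
have [|i i_n c_i] := c_cov t.
  apply: (hpball_sub_hpball _ mu_sigma0 _ _ p_in); rewrite ?mulr_gt0 //.
  - rewrite (powRM _ (ltW theta0) (ltW sigma0)) (powRM _ (ltW mu0) (ltW sigma0)).
    by rewrite -mulrDl ler_piMl ?(ltW sigma_pow).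
  - by rewrite mulrA -mulrDl ler_piMl ?(ltW sigma0).
  - exact: (le_hpball s_gt0 (ltW (mulr_gt0 kappa0 sigma0)) kappa_mu).
  - by rewrite /= gerBl mulr_ge0 ?powR_ge0.
by exists i => //; rewrite c_i mulrA.
Qed.

End Covering.

Lemma sup_le_absorb (R : realType) (A : set R) (k c : R) : has_sup A -> k < 1 ->
  (forall v, A v -> v <= k * sup A + c) -> sup A <= c / (1 - k).
Proof.
move=> [A0 _] k1 Ak; have : sup A <= k * sup A + c by apply: ge_sup.
rewrite ler_pdivlMr ?subr_gt0 //; lra.
Qed.

Lemma exists_mulr_lt1 (R : realFieldType) (a : R) : 0 <= a ->
  exists2 eps, 0 < eps < 1 & a * eps < 1.
Proof.
move=> a0; exists (a + 2)^-1; last by rewrite ltr_pdivrMr ?mul1r; lra.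
by rewrite invr_gt0 invf_lt1; lra.
Qed.

Section Iteration.
Variables (R : realType) (d : nat) (s rho0 gamma : R) (Cn : nat -> R).
Variables (y0 : pt R d) (S D : set (pt R d) -> R) (E : R).
Hypotheses (s_gt0 : 0 < s) (rho0_gt0 : 0 < rho0) (gamma_gt0 : 0 < gamma).
Hypotheses (Cn_gt0 : forall n, 0 < Cn n) (E_ge0 : 0 <= E).
Let B := hpball s y0 rho0.
Hypothesis S_ge0 : forall y r, hpball s y r `<=` B -> 0 <= S (hpball s y r).
Hypothesis S_le_B : forall y r, hpball s y r `<=` B -> S (hpball s y r) <= S B.
Hypothesis DB_ge0 : 0 <= D B.
Hypothesis S_le_covering : forall (n : nat) (c : nat -> pt R d) (r : nat -> R),
  (forall i, (i <= n)%N -> 0 < r i /\ hpball s (c i) (r i) `<=` B) ->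
  hpball s (c 0%N) (r 0%N) `<=`
    \bigcup_(i in [set i | (1 <= i <= n)%N]) hpball s (c i) (r i) ->
  S (hpball s (c 0%N) (r 0%N)) <=
    Cn n * (\sum_(1 <= i < n.+1) S (hpball s (c i) (r i)) + D B).

Lemma S_le_uniform_covering n (c : nat -> pt R d) y (r0 r V : R) :
  0 < r0 -> 0 < r -> hpball s y r0 `<=` B -> (forall i, hpball s (c i) r `<=` B) ->
  hpball s y r0 `<=` \bigcup_(i in [set i | (1 <= i <= n)%N]) hpball s (c i) r ->
  (forall i, (1 <= i <= n)%N -> S (hpball s (c i) r) <= V) ->
  S (hpball s y r0) <= Cn n * (n%:R * V + D B).
Proof.
move=> r00 r_gt0 yB cB cov SV.
pose c' i := if i == 0%N then y else c i.
pose r' i := if i == 0%N then r0 else r.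
apply: le_trans (S_le_covering (n := n) (c := c') (r := r') _ _) _.
- by move=> [|i] _; rewrite /c' /r' /=; split.
- move=> z; rewrite /c' /r' /= => /cov [[|i] i_n zi]; first by case/andP: i_n.
  by exists i.+1.
rewrite ler_wpM2l ?(ltW (Cn_gt0 n)) // lerD2r.
rewrite (eq_big_nat _ _ (F2 := fun i => S (hpball s (c i) r))); last first.
  by move=> [|i].
apply: le_trans (ler_sum_nat (G := fun => V) _) _.
  by move=> i /andP[i1 i2]; apply: SV; rewrite i1 -ltnS.
by rewrite sumr_const_nat subn1 mulr_natl.
Qed.

Lemma powR_radius_le y (sigma : R) : 0 < sigma -> hpball s y sigma `<=` B ->
  sigma `^ gamma <= rho0 `^ gamma.
Proof.
move=> sigma0 yB; have := hpball_radius_le s_gt0 sigma0 (ltW rho0_gt0) yB.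
by apply: ge0_ler_powR; rewrite ?nnegrE ltW.
Qed.

Lemma hpball_scale_sub_B y (theta sigma : R) :
  0 <= theta -> theta <= 1 -> 0 < sigma ->
  hpball s y sigma `<=` B -> hpball s y (theta * sigma) `<=` B.
Proof.
move=> theta0 theta1 sigma0.
exact: subset_trans (hpball_scale_sub s_gt0 theta0 theta1 (ltW sigma0)).
Qed.

Definition scaled_S (theta : R) : set R :=
  [set v | exists y sigma, [/\ 0 < sigma, hpball s y sigma `<=` B &
     v = sigma `^ gamma * S (hpball s y (theta * sigma))]].

Lemma has_sup_scaled_S (theta : R) : 0 <= theta -> theta <= 1 ->
  has_sup (scaled_S theta).
Proof.
move=> theta0 theta1; split.
  by exists (rho0 `^ gamma * S (hpball s y0 (theta * rho0))), y0, rho0; split.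
exists (rho0 `^ gamma * S B) => _ [y [sigma [sigma0 yB ->]]].
have yB' := hpball_scale_sub_B theta0 theta1 sigma0 yB.
apply: ler_pM; [exact: powR_ge0 | exact: S_ge0 yB' | | exact: S_le_B yB'].
exact: powR_radius_le yB.
Qed.

Lemma scaled_S_le_covering (theta lambda mu Lambda : R) n :
  0 < theta -> theta <= 1 -> 0 < lambda -> lambda <= 1 -> 0 < mu ->
  hpball_covering d s theta lambda mu n ->
  (forall c (rho : R), 0 < rho -> hpball s c rho `<=` B ->
     rho `^ gamma * S (hpball s c (lambda * rho)) <= Lambda) ->
  forall y (sigma : R), 0 < sigma -> hpball s y sigma `<=` B ->
  sigma `^ gamma * S (hpball s y (theta * sigma)) <=
    Cn n * (n%:R * Lambda / mu `^ gamma + rho0 `^ gamma * D B).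
Proof.
move=> theta0 theta1 lambda0 lambda1 mu0 cov S_Lambda y sigma sigma0 yB.
have [c [c_sub c_cov]] := cov y sigma sigma0.
have rho0' : 0 < mu * sigma by rewrite mulr_gt0.
have cB i : hpball s (c i) (lambda * (mu * sigma)) `<=` B.
  exact: hpball_scale_sub_B (ltW lambda0) lambda1 rho0' (subset_trans (c_sub i) yB).
have Sc i : S (hpball s (c i) (lambda * (mu * sigma))) <=
    Lambda / (mu `^ gamma * sigma `^ gamma).
  rewrite -powRM ?(ltW mu0) ?(ltW sigma0) // ler_pdivlMr ?powR_gt0 // mulrC.
  exact: S_Lambda (subset_trans (c_sub i) yB).
have theta_yB := hpball_scale_sub_B (ltW theta0) theta1 sigma0 yB.
have := S_le_uniform_covering (mulr_gt0 theta0 sigma0) (mulr_gt0 lambda0 rho0')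
  theta_yB cB c_cov (fun i _ => Sc i).
have sigma_pow := powR_gt0 gamma sigma0; have mu_pow := powR_gt0 gamma mu0.
move=> /(ler_wpM2l (ltW sigma_pow)) /le_trans; apply.
have -> : sigma `^ gamma *
      (Cn n * (n%:R * (Lambda / (mu `^ gamma * sigma `^ gamma)) + D B))
    = Cn n * (n%:R * Lambda / mu `^ gamma + sigma `^ gamma * D B).
  by field; rewrite !gt_eqF.
rewrite ler_wpM2l ?(ltW (Cn_gt0 n)) // lerD2l ler_wpM2r //.
exact: powR_radius_le yB.
Qed.

Lemma scaled_S_le_covering_affine (theta lambda mu L : R) n :
  0 < theta -> theta <= 1 -> 0 < lambda -> lambda <= 1 -> 0 < mu ->
  hpball_covering d s theta lambda mu n ->
  (forall c (rho : R), 0 < rho -> hpball s c rho `<=` B ->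
     rho `^ gamma * S (hpball s c (lambda * rho)) <= L * (E + D B)) ->
  forall y (sigma : R), 0 < sigma -> hpball s y sigma `<=` B ->
  sigma `^ gamma * S (hpball s y (theta * sigma)) <=
    Cn n * (n%:R * L / mu `^ gamma + rho0 `^ gamma) * (E + D B).
Proof.
move=> theta0 theta1 lambda0 lambda1 mu0 cov S_L y sigma sigma0 yB.
apply: le_trans (scaled_S_le_covering theta0 theta1 lambda0 lambda1 mu0 cov S_L
  sigma0 yB) _.
rewrite -[X in _ <= X]mulrA ler_wpM2l ?(ltW (Cn_gt0 n)) // mulrDl mulrA.
rewrite [X in X <= _]addrC [X in _ <= X]addrC mulrAC lerD //.
by rewrite ler_wpM2l ?powR_ge0 // lerDr.
Qed.

Section Absorption.
Variables (theta0 eps : R).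
Hypotheses (theta0_gt0 : 0 < theta0) (theta0_lt1 : theta0 < 1) (eps_ge0 : 0 <= eps).
Hypothesis S_small : forall y (sigma : R), 0 < sigma -> hpball s y sigma `<=` B ->
  sigma `^ gamma * S (hpball s y (theta0 * sigma)) <=
    eps * sigma `^ gamma * S (hpball s y sigma) + E.
Let Q := sup (scaled_S theta0).

Lemma scaled_S_le_sup y (sigma : R) : 0 < sigma -> hpball s y sigma `<=` B ->
  sigma `^ gamma * S (hpball s y (theta0 * sigma)) <= Q.
Proof.
move=> sigma0 yB; have [_ ub] := has_sup_scaled_S (ltW theta0_gt0) (ltW theta0_lt1).
by apply: (ub_le_sup ub); exists y, sigma; split.
Qed.

Lemma scaled_S_theta0_sq_le c (rho : R) : 0 < rho -> hpball s c rho `<=` B ->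
  rho `^ gamma * S (hpball s c (theta0 * theta0 * rho)) <=
    eps * Q + E / theta0 `^ gamma.
Proof.
move=> rho_gt0 cB; have theta0_pow := powR_gt0 gamma theta0_gt0.
rewrite -mulrA -(ler_pM2l theta0_pow) mulrDr.
have -> : theta0 `^ gamma * (E / theta0 `^ gamma) = E by rewrite mulrC divfK ?gt_eqF.
have := S_small (mulr_gt0 theta0_gt0 rho_gt0)
  (hpball_scale_sub_B (ltW theta0_gt0) (ltW theta0_lt1) rho_gt0 cB).
have := ler_wpM2l (mulr_ge0 eps_ge0 (ltW theta0_pow)) (scaled_S_le_sup rho_gt0 cB).
rewrite (powRM _ (ltW theta0_gt0) (ltW rho_gt0)); lra.
Qed.

Lemma scaled_S_theta0_le (mu : R) n : 0 < mu ->
  hpball_covering d s theta0 (theta0 * theta0) mu n ->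
  Cn n * n%:R / mu `^ gamma * eps < 1 ->
  forall y (sigma : R), 0 < sigma -> hpball s y sigma `<=` B ->
  sigma `^ gamma * S (hpball s y (theta0 * sigma)) <=
    Cn n * (n%:R / (theta0 `^ gamma * mu `^ gamma) + rho0 `^ gamma)
      / (1 - Cn n * n%:R / mu `^ gamma * eps) * (E + D B).
Proof.
move=> mu0 cov k_lt1; set k := Cn n * n%:R / mu `^ gamma * eps.
have theta0_pow := powR_gt0 gamma theta0_gt0; have mu_pow := powR_gt0 gamma mu0.
have key v : scaled_S theta0 v -> v <= k * Q +
    Cn n * (n%:R * E / (theta0 `^ gamma * mu `^ gamma) + rho0 `^ gamma * D B).
  move=> [y [sigma [sigma0 yB ->]]].
  apply: le_trans (scaled_S_le_covering theta0_gt0 (ltW theta0_lt1)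
    (mulr_gt0 theta0_gt0 theta0_gt0) (mulr_ile1 (ltW theta0_gt0) (ltW theta0_gt0)
    (ltW theta0_lt1) (ltW theta0_lt1)) mu0 cov scaled_S_theta0_sq_le sigma0 yB) _.
  by rewrite le_eqVlt; apply/orP; left; apply/eqP; rewrite /k; field; rewrite !gt_eqF.
move=> y sigma sigma0 yB; apply: le_trans (scaled_S_le_sup sigma0 yB) _.
apply: le_trans (sup_le_absorb (has_sup_scaled_S (ltW theta0_gt0) (ltW theta0_lt1))
  k_lt1 key) _.
rewrite -/k [X in _ <= X]mulrAC ler_wpM2r ?invr_ge0 ?subr_ge0 ?(ltW k_lt1) //.
rewrite -[X in _ <= X]mulrA ler_wpM2l ?(ltW (Cn_gt0 n)) //.
set a := n%:R / _.
have a_ge0 : 0 <= a by rewrite divr_ge0 ?mulr_ge0 ?(ltW theta0_pow) ?(ltW mu_pow).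
have b_ge0 := powR_ge0 rho0 gamma.
rewrite mulrAC -/a; have := mulr_ge0 a_ge0 DB_ge0; have := mulr_ge0 b_ge0 E_ge0.
lra.
Qed.

End Absorption.

End Iteration.
Theorem lemma3p6 (R : realType) (s : R) (d : nat) (rho0 : R) (Cn : nat -> R) :
  0 < s -> s < 1 -> (1 <= d)%N -> 0 < rho0 -> (forall n, 0 < Cn n) ->
  forall theta0 gamma : R, 0 < theta0 -> theta0 <= 2^-1 -> 0 < gamma ->
  exists eps : R, 0 < eps /\ eps < 1 /\
  forall theta : R, 0 < theta -> theta < 1 ->
  exists C : R, 0 < C /\
  forall (y0 : pt R d) (S D : set (pt R d) -> R) (E : R),
    let B := hpball s y0 rho0 in
    (* S, D non-negative on convex subsets of B *)
    (forall A, A `<=` B -> convex_pt A -> 0 <= S A /\ 0 <= D A) ->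
    (* S, D monotone w.r.t. inclusion on convex subsets of B *)
    (forall A1 A2, A1 `<=` A2 -> A2 `<=` B -> convex_pt A1 -> convex_pt A2 ->
        S A1 <= S A2 /\ D A1 <= D A2) ->
    (* covering hypothesis with constants Cn n *)
    (forall (n : nat) (c : nat -> pt R d) (r : nat -> R),
        (forall i, (i <= n)%N -> 0 < r i /\ hpball s (c i) (r i) `<=` B) ->
        hpball s (c 0%N) (r 0%N) `<=`
          \bigcup_(i in [set i | (1 <= i <= n)%N]) hpball s (c i) (r i) ->
        S (hpball s (c 0%N) (r 0%N)) <=
          Cn n * (\sum_(1 <= i < n.+1) S (hpball s (c i) (r i)) + D B)) ->
    0 <= E ->
    (forall (y : pt R d) (sigma : R), 0 < sigma -> hpball s y sigma `<=` B ->
        sigma `^ gamma * S (hpball s y (theta0 * sigma)) <=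
          eps * sigma `^ gamma * S (hpball s y sigma) + E) ->
    forall (y : pt R d) (sigma : R), 0 < sigma -> hpball s y sigma `<=` B ->
      sigma `^ gamma * S (hpball s y (theta * sigma)) <= C * (E + D B).
Proof.
move=> s_gt0 _ _ rho0_gt0 Cn_gt0 theta0 gamma theta0_gt0 theta0_le gamma_gt0.
have theta0_lt1 : theta0 < 1 by lra.
have theta0_sq_gt0 : 0 < theta0 * theta0 by rewrite mulr_gt0.
have theta0_sq_le1 : theta0 * theta0 <= 1 by rewrite mulr_ile1 ?ltW.
have [mu1 [n1 [mu1_gt0 cov1]]] := exists_hpball_covering d s_gt0
  theta0_gt0 theta0_lt1 theta0_sq_gt0 theta0_sq_le1.
have a_ge0 : 0 <= Cn n1 * n1%:R / mu1 `^ gamma.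
  by rewrite divr_ge0 ?powR_ge0 // mulr_ge0 ?(ltW (Cn_gt0 n1)).
have [eps /andP[eps_gt0 eps_lt1] k_lt1] := exists_mulr_lt1 a_ge0.
exists eps; split => //; split => // theta theta_gt0 theta_lt1.
have [mu2 [n2 [mu2_gt0 cov2]]] := exists_hpball_covering d s_gt0
  theta_gt0 theta_lt1 theta0_gt0 (ltW theta0_lt1).
pose K1 := Cn n1 * (n1%:R / (theta0 `^ gamma * mu1 `^ gamma) + rho0 `^ gamma)
  / (1 - Cn n1 * n1%:R / mu1 `^ gamma * eps).
have K1_ge0 : 0 <= K1.
  rewrite /K1 divr_ge0 ?subr_ge0 ?(ltW k_lt1) // mulr_ge0 ?(ltW (Cn_gt0 n1)) //.
  by rewrite addr_ge0 ?powR_ge0 // divr_ge0 // mulr_ge0 ?powR_ge0.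
exists (Cn n2 * (n2%:R * K1 / mu2 `^ gamma + rho0 `^ gamma)); split.
  by rewrite mulr_gt0 // ltr_wpDl ?powR_gt0 // divr_ge0 ?powR_ge0 // mulr_ge0.
move=> y0 S D E B S_D_ge0 S_D_mono S_covering E_ge0 Heps.
have S_ge0 y r : hpball s y r `<=` B -> 0 <= S (hpball s y r).
  by move=> yB; have [] := S_D_ge0 _ yB (@convex_hpball _ _ _ _ _).
have S_le_B y r : hpball s y r `<=` B -> S (hpball s y r) <= S B.
  move=> yB; have [] // := S_D_mono _ _ yB (@subset_refl _ B)
    (@convex_hpball _ _ _ _ _) (@convex_hpball _ _ _ _ _).
have DB_ge0 : 0 <= D B.
  by have [] := S_D_ge0 B (@subset_refl _ B) (@convex_hpball _ _ _ _ _).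
apply: (scaled_S_le_covering_affine s_gt0 rho0_gt0 gamma_gt0 Cn_gt0 E_ge0 DB_ge0
  S_covering theta_gt0 (ltW theta_lt1) theta0_gt0 (ltW theta0_lt1) mu2_gt0 cov2).
exact: (scaled_S_theta0_le s_gt0 rho0_gt0 gamma_gt0 Cn_gt0 E_ge0 S_ge0 S_le_B
  DB_ge0 S_covering theta0_gt0 theta0_lt1 (ltW eps_gt0) Heps mu1_gt0 cov1 k_lt1).
Qed.
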